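(* Let $\underline a=\{a_i\}_{i\in I}$ be a pseudo-Cauchy sequence in $K$ of algebraic type and let $F,G$ be two distinct monic polynomials of smallest degree among polynomials not fixed by $\underline a$. Then $\mu_{F,\infty}\neq\mu_{G,\infty}$.
   Context: $(K,v)$ is a valued field. A pseudo-Cauchy sequence is $\underline a=\{a_i\}_{i\in I}\subseteq K$, $I$ well-ordered with at least two elements, $v(a_i-a_j)<v(a_j-a_k)$ for $i<j<k$. $I^*=I\setminus\{\max I\}$ if $I$ has a maximum, else $I^*=I$. $\gamma_i=v(a_{i+1}-a_i)$ and $\nu_i=v_{a_i,\gamma_i}$ for $i\in I^*$, with $v_{a,\gamma}(\sum_k b_k(x-a)^k)=\min_k\{v(b_k)+k\gamma\}$. A polynomial $f$ is fixed by $\underline a$ if $\{v(f(a_i))\}_{i\in I}$ is ultimately constant; $\underline a$ is of algebraic type if $I^*$ has no maximum and some polynomial is not fixed by $\underline a$. For $F$ monic of smallest degree not fixed by $\underline a$ and $g$ with $\deg g<\deg F$, $\nu_i(g)$ is ultimately constant; call this value $\nu_{\mathfrak v}(g)$. Then $\mu_{F,\infty}(f)=\min_{0\le j\le r}\{\nu_{\mathfrak v}(f_j)+j\cdot\infty\}$, i.e. $\mu_{F,\infty}(f)=\nu_{\mathfrak v}(f_0)$, where $f=\sum_{j=0}^r f_jF^j$ with $\deg f_j<\deg F$ is the $F$-expansion of $f$; it is a valuation on $K[x]$ with $\mu_{F,\infty}(F)=\infty$. *)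

From HB Require Import structures.
From mathcomp Require Import all_boot all_order all_algebra.
From Stdlib Require Import ClassicalEpsilon.
Set Implicit Arguments. Unset Strict Implicit. Unset Printing Implicit Defensive.
Import Order.TTheory GRing.Theory.
Local Open Scope ring_scope.

(* Value group Gamma: an abelian group (zmodType) with a relation leG;
   the extended value set Gamma u {oo} is [option Gamma], with None = oo. *)
Section ValuedField.
Variables (Gam : zmodType) (leG : rel Gam).

Definition ordered_abelian_group : Prop :=
  [/\ reflexive leG, transitive leG, antisymmetric leG, total leG &
      forall x y z, leG x y -> leG (x + z) (y + z)].

Definition leo (x y : option Gam) : bool :=
  match x, y with
  | _, None => true
  | None, Some _ => false
  | Some a, Some b => leG a b
  end.
Definition lto (x y : option Gam) : bool := leo x y && (x != y).
Definition addo (x y : option Gam) : option Gam :=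
  match x, y with Some a, Some b => Some (a + b) | _, _ => None end.
Definition mino (x y : option Gam) : option Gam := if leo x y then x else y.

Variable K : fieldType.

Definition is_valuation (v : K -> option Gam) : Prop :=
  [/\ forall x, v x = None <-> x = 0,
      forall x y, v (x * y) = addo (v x) (v y) &
      forall x y, leo (mino (v x) (v y)) (v (x + y))].

(* v_{a,gamma}(sum_k b_k (x-a)^k) = min_k (v(b_k) + k gamma) *)
Definition vag (v : K -> option Gam) (a : K) (gam : Gam) (f : {poly K}) : option Gam :=
  let b := f \Po ('X + a%:P) in
  \big[mino/None]_(k < size b) addo (v b`_k) (Some (gam *+ k)).

Variables (dI : Order.disp_t) (I : orderType dI).

Definition well_ordered : Prop :=
  forall P : I -> Prop, (exists i, P i) -> exists i, P i /\ forall j, P j -> (i <= j)%O.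

Variable v : K -> option Gam.
Variable a : I -> K.

Definition pseudo_cauchy : Prop :=
  (exists i j : I, i != j) /\
  forall i j k : I, (i < j)%O -> (j < k)%O -> lto (v (a i - a j)) (v (a j - a k)).

Definition inIstar (i : I) : Prop := ~ (forall j, (j <= i)%O).

Definition succI (i : I) : I :=
  epsilon (inhabits i) (fun j => (i < j)%O /\ forall k, (i < k)%O -> (j <= k)%O).

Definition gam_i (i : I) : option Gam := v (a (succI i) - a i).

(* nu_i = v_{a_i, gamma_i}; gamma_i is finite for all i in I^* in the
   algebraic-type case, the default 0 is never used there *)
Definition nu_i (i : I) : {poly K} -> option Gam := vag v (a i) (odflt 0 (gam_i i)).

Definition fixed (f : {poly K}) : Prop :=
  exists i0, forall i, (i0 <= i)%O -> v f.[a i] = v f.[a i0].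

Definition algebraic_type : Prop :=
  (forall i, inIstar i -> exists j, inIstar j /\ (i < j)%O) /\
  exists f, ~ fixed f.

Definition min_not_fixed (F : {poly K}) : Prop :=
  [/\ F \is monic, ~ fixed F & forall g, ~ fixed g -> (size F <= size g)%N].

Definition nu_v (g : {poly K}) : option Gam :=
  epsilon (inhabits None)
    (fun c => exists i0, inIstar i0 /\
       forall i, inIstar i -> (i0 <= i)%O -> nu_i i g = c).

(* mu_{F,oo}(f) = nu_v(f_0), f_0 = f mod F the 0-th coefficient of the F-expansion *)
Definition mu_inf (F : {poly K}) (f : {poly K}) : option Gam := nu_v (f %% F).

End ValuedField.

From HB Require Import structures.
From mathcomp Require Import all_boot all_order all_algebra.
From Stdlib Require Import ClassicalEpsilon Classical.
Set Implicit Arguments. Unset Strict Implicit.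
Import Order.TTheory GRing.Theory.
Local Open Scope ring_scope.

(* Distinct monic polynomials of minimal degree among those not fixed by the
   sequence are irreducible (a factorisation into factors of smaller degree
   would consist of fixed polynomials, and fixed polynomials are closed under
   products), hence coprime.  A Bezout relation u F + w G = 1 then produces a
   polynomial u F whose F-expansion has zero constant term, so mu_{F,oo}(u F)
   = oo, while its G-expansion has constant term 1, so mu_{G,oo}(u F) = v(1)
   is finite. *)

Section MinimalNonFixed.
Variables (Gam : zmodType) (leG : rel Gam) (K : fieldType)
  (v : K -> option Gam) (dI : Order.disp_t) (I : orderType dI) (a : I -> K).
Hypothesis v_valuation : is_valuation leG v.

Lemma valuation1_neq_oo : v 1 != None.
Proof. by case: v_valuation => v_eq_oo _ _; apply/eqP => /v_eq_oo/eqP; rewrite oner_eq0. Qed.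

Lemma fixedC (i : I) (c : K) : fixed v a c%:P.
Proof. by exists i => j _; rewrite !hornerC. Qed.

Lemma fixedM (g h : {poly K}) : fixed v a g -> fixed v a h -> fixed v a (g * h).
Proof.
case: v_valuation => _ vM _ [i g_const] [j h_const].
exists (Order.max i j) => k; rewrite ge_max => /andP[ik jk].
have [im jm] : (i <= Order.max i j)%O /\ (j <= Order.max i j)%O.
  by rewrite !le_max !lexx orbT.
by rewrite !hornerM !vM (g_const k ik) (h_const k jk) (g_const _ im) (h_const _ jm).
Qed.

Variable F : {poly K}.
Hypothesis F_min : min_not_fixed v a F.

Lemma fixed_of_size_lt (g : {poly K}) : (size g < size F)%N -> fixed v a g.
Proof.
case: F_min => _ _ F_le gF; apply: NNPP => /F_le.
by rewrite leqNgt gF.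
Qed.

Lemma min_not_fixed_size_gt1 : (1 < size F)%N.
Proof.
case: F_min => F_monic F_nfixed _.
(* [I] is nonempty: otherwise nothing would be fixed, [0] included. *)
have [i _] : fixed v a 0.
  by apply: fixed_of_size_lt; rewrite size_poly0 size_poly_gt0 monic_neq0.
rewrite ltnNge; apply/negP => /size1_polyC F_c.
by apply: F_nfixed; rewrite F_c; apply: fixedC.
Qed.

Lemma min_not_fixed_irreducible : irreducible_poly F.
Proof.
split; first exact: min_not_fixed_size_gt1.
move=> q q_ne1 qF; rewrite -dvdp_size_eqp //.
case: F_min => F_monic F_nfixed _; have F_neq0 := monic_neq0 F_monic.
have F_qr : F = F %/ q * q by rewrite divpK.
have q_neq0 : q != 0 by apply: contra_neq F_neq0 => q0; rewrite F_qr q0 mulr0.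
have r_neq0 : F %/ q != 0 by apply: contra_neq F_neq0 => r0; rewrite F_qr r0 mul0r.
rewrite eqn_leq dvdp_leq //=; apply: contraT; rewrite -ltnNge => qltF.
have q_gt1 : (1 < size q)%N by rewrite ltn_neqAle eq_sym q_ne1 size_poly_gt0.
have rltF : (size (F %/ q)%R < size F)%N.
  move: q_gt1; rewrite {2}F_qr size_mul //; case: (size q) => [|[|n]] // _.
  by rewrite !addnS /= ltnS leq_addr.
by case: F_nfixed; rewrite F_qr; apply: fixedM; apply: fixed_of_size_lt.
Qed.

Lemma min_not_fixed_coprime (G : {poly K}) :
  min_not_fixed v a G -> F != G -> coprimep F G.
Proof.
move=> G_min FG; rewrite (irreducible_poly_coprime _ min_not_fixed_irreducible).
have [F_monic F_nfixed _] := F_min; have [G_monic _ G_le] := G_min.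
apply: contra FG => FdvdG; rewrite -eqp_monic // -dvdp_size_eqp //.
by rewrite eqn_leq dvdp_leq ?monic_neq0 //= G_le.
Qed.

End MinimalNonFixed.

Section UltimateValue.
Variables (Gam : zmodType) (leG : rel Gam) (K : fieldType)
  (v : K -> option Gam) (dI : Order.disp_t) (I : orderType dI) (a : I -> K).

Lemma lt_inIstar (i j : I) : (i < j)%O -> inIstar i.
Proof. by move=> ij i_max; move: (i_max j); rewrite leNgt ij. Qed.

Variable i1 : I.
Hypothesis i1_Istar : inIstar i1.

Lemma nu_v_eq (p : {poly K}) (c : option Gam) :
  (forall i, inIstar i -> nu_i leG v a i p = c) -> nu_v leG v a p = c.
Proof.
move=> nu_c; rewrite /nu_v.
set P := fun c' => exists i0, inIstar i0 /\
  forall i, inIstar i -> (i0 <= i)%O -> nu_i leG v a i p = c'.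
have [|i0 [i0_Istar nu_c']] := epsilon_spec (inhabits None) P.
  by exists c, i1; split=> // i i_Istar _; apply: nu_c.
by rewrite -(nu_c' i0 i0_Istar (lexx _)) nu_c.
Qed.

Lemma mu_inf_mull (F g : {poly K}) : mu_inf leG v a F (g * F) = None.
Proof.
rewrite /mu_inf modp_mull; apply: nu_v_eq => i _.
by rewrite /nu_i /vag comp_poly0 size_poly0 big_ord0.
Qed.

Lemma mu_inf_modp1 (G f : {poly K}) :
  f %% G = 1 -> mu_inf leG v a G f = addo (v 1) (Some 0).
Proof.
move=> fG1; rewrite /mu_inf fG1; apply: nu_v_eq => i _.
rewrite /nu_i /vag comp_polyC size_polyC oner_eq0 big_ord_recl big_ord0.
by rewrite coefC /= mulr0n; case: addo.
Qed.

End UltimateValue.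

Theorem mainTheorem10 (Gam : zmodType) (leG : rel Gam) (K : fieldType)
  (v : K -> option Gam) (dI : Order.disp_t) (I : orderType dI) (a : I -> K)
  (F G : {poly K}) :
  ordered_abelian_group leG ->
  is_valuation leG v ->
  well_ordered I ->
  pseudo_cauchy leG v a ->
  algebraic_type v a ->
  min_not_fixed v a F ->
  min_not_fixed v a G ->
  F != G ->
  mu_inf leG v a F <> mu_inf leG v a G.
Proof.
move=> _ v_valuation _ [[i [j ij]] _] _ F_min G_min FG.
have [i1 i1_Istar] : exists i1 : I, inIstar i1.
  case/orP: (lt_total ij) => [lt_ij|lt_ji].
  - by exists i; apply: lt_inIstar lt_ij.
  - by exists j; apply: lt_inIstar lt_ji.
have [[u w] /= Bezout] := Bezout_eq1_coprimepP _ _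
  (min_not_fixed_coprime v_valuation F_min G_min FG).
have uF_modG : (u * F) %% G = 1.
  rewrite -(addrK (w * G) (u * F)) Bezout modpD modpN modp_mull oppr0 addr0.
  by rewrite modp_small // size_polyC oner_eq0 (min_not_fixed_size_gt1 G_min).
have muF_uF : mu_inf leG v a F (u * F) = None := mu_inf_mull leG v a i1_Istar F u.
have muG_uF : mu_inf leG v a G (u * F) = addo (v 1) (Some 0) :=
  mu_inf_modp1 leG v a i1_Istar uF_modG.
move=> /(congr1 (fun mu => mu (u * F))); rewrite muF_uF muG_uF.
by case: (v 1) (valuation1_neq_oo v_valuation).
Qed.
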